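(* Let $d\ge1$, $U_{\max}>0$, $\tau>0$, $\beta>0$, $\eta>0$, $\lambda_{\mathrm{wd}}\ge0$, $y^*_{\mathrm{target}}\in\mathbb{R}^d$, and let $U(y)=U_{\max}\exp(-\tau\|y-y^*_{\mathrm{target}}\|^2)$. Given a nonzero $w_0\in\mathbb{R}^d$, define the iteration for $t\ge0$: \[ y_t=\arg\max_{y\in\mathbb{R}^d}\Big(w_t^\top y-\tfrac{\beta}{2}\|y\|^2\Big),\qquad w_{t+1}=(1-\lambda_{\mathrm{wd}})w_t-\eta\big(w_t^\top y_t-U(y_t)\big)y_t. \] Let $\hat u=w_0/\|w_0\|$, $C=\hat u^\top y^*_{\mathrm{target}}$, $D^2=\|y^*_{\mathrm{target}}\|^2-C^2$, $\bar U_{\max}=U_{\max}\exp(-\tau D^2)$, $F(r)=\frac{\eta}{\beta}U(r\hat u)-\eta r^2-\lambda_{\mathrm{wd}}$ and $f(r)=r(1+F(r))$. Assume: (A1) $F(r)>0$ for all $r\in[0,C]$; (A2) $\lambda_{\mathrm{wd}}<1$ and $\eta$ is such that $f'(r)>0$ for all $r\in[0,r^*]$, where $r^*$ is the unique positive root of $F$. Then: (i) $y_t\in\mathrm{span}(w_0)$ for all $t\ge0$; (ii) writing $y_t=r_t\hat u$, with $r_0=\|w_0\|/\beta<r^*$, the sequence $(r_t)$ converges to $r^*$; (iii) the point $y^*=r^*\hat u$ satisfies $r^*>C$ and $U(y^* )<\bar U_{\max}\le U_{\max}$, with $\bar U_{\max}<U_{\max}$ whenever $D>0$, i.e. whenever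 $y^*_{\mathrm{target}}\notin\mathrm{span}(w_0)$.
   Context: This models standard iterative RLHF with a linear reward model $r_w(y)=w^\top y$, an $L_2$ action cost $\frac{\beta}{2}\|y\|^2$ for the policy, and reward-model updates by one step of gradient descent on the squared error $\frac12(w^\top y_t-U(y_t))^2$ with learning rate $\eta$ and weight decay $\lambda_{\mathrm{wd}}$. *)

From HB Require Import structures.
From mathcomp Require Import all_boot all_order all_algebra.
From mathcomp Require Import all_classical all_reals all_analysis.
Set Implicit Arguments. Unset Strict Implicit. Unset Printing Implicit Defensive.
Import Order.TTheory GRing.Theory Num.Theory.
Import numFieldNormedType.Exports.
Local Open Scope ring_scope.

Definition dotv (R : realType) (d : nat) (u v : 'rV[R]_d) : R :=
  \sum_(i < d) u 0 i * v 0 i.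

Definition sqnorm (R : realType) (d : nat) (v : 'rV[R]_d) : R := dotv v v.
Definition enorm (R : realType) (d : nat) (v : 'rV[R]_d) : R := Num.sqrt (sqnorm v).

Definition util (R : realType) (d : nat) (Umax tau : R) (ytar y : 'rV[R]_d) : R :=
  Umax * expR (- (tau * sqnorm (y - ytar))).

Definition pobj (R : realType) (d : nat) (beta : R) (w y : 'rV[R]_d) : R :=
  dotv w y - beta / 2 * sqnorm y.

Definition rlhf_iter (R : realType) (d : nat) (Umax tau beta eta lwd : R)
    (ytar w0 : 'rV[R]_d) (w y : nat -> 'rV[R]_d) : Prop :=
  [/\ w 0%N = w0,
      (forall t z, pobj beta (w t) z <= pobj beta (w t) (y t)) &
      (forall t, w t.+1 = (1 - lwd) *: w t
                          - (eta * (dotv (w t) (y t) - util Umax tau ytar (y t))) *: y t)].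

Definition uhat (R : realType) (d : nat) (w0 : 'rV[R]_d) : 'rV[R]_d :=
  (enorm w0)^-1 *: w0.

Definition Ffun (R : realType) (d : nat) (Umax tau beta eta lwd : R)
    (ytar w0 : 'rV[R]_d) (r : R) : R :=
  eta / beta * util Umax tau ytar (r *: uhat w0) - eta * r ^+ 2 - lwd.

Definition ffun (R : realType) (d : nat) (Umax tau beta eta lwd : R)
    (ytar w0 : 'rV[R]_d) (r : R) : R :=
  r * (1 + Ffun Umax tau beta eta lwd ytar w0 r).

From HB Require Import structures.
From mathcomp Require Import all_boot all_order all_algebra.
From mathcomp Require Import all_classical all_reals all_analysis.
From mathcomp Require Import ring lra.
Import Order.TTheory GRing.Theory Num.Theory.
Import numFieldNormedType.Exports.
Local Open Scope classical_set_scope.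
Local Open Scope ring_scope.

(* The policy optimum is y_t = w_t / beta and the reward update only rescales
   w_t, so the whole trajectory stays on the ray through w0: y_t = r_t uhat
   with r_(t+1) = f(r_t).  On that ray ||r uhat - ytar||^2 = (r - C)^2 + D^2,
   hence U(r uhat) = Ubar exp(-tau (r - C)^2).  So F decreases on [C, +oo),
   and with (A1) it is positive on [0, rstar); thus r < f(r) there, f is
   increasing on [0, rstar] by (A2), and f(rstar) = rstar.  The radii
   therefore increase, stay below rstar, and converge to a fixed point of f
   in (0, rstar], which can only be rstar. *)

Section Euclidean.
Context {R : realType} {d : nat}.
Implicit Types (u v w : 'rV[R]_d) (a r : R).

Lemma dotvC u v : dotv u v = dotv v u.
Proof. by apply: eq_bigr => i _; rewrite mulrC. Qed.

Lemma dotvDl u v w : dotv (u + v) w = dotv u w + dotv v w.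
Proof. by rewrite /dotv -big_split; apply: eq_bigr => i _; rewrite mxE mulrDl. Qed.

Lemma dotvZl a u w : dotv (a *: u) w = a * dotv u w.
Proof. by rewrite /dotv mulr_sumr; apply: eq_bigr => i _; rewrite mxE mulrA. Qed.

Lemma dotvBl u v w : dotv (u - v) w = dotv u w - dotv v w.
Proof. by rewrite dotvDl -scaleN1r dotvZl mulN1r. Qed.

Lemma dotvZr a u w : dotv w (a *: u) = a * dotv w u.
Proof. by rewrite dotvC dotvZl dotvC. Qed.

Lemma dotvBr u v w : dotv w (u - v) = dotv w u - dotv w v.
Proof. by rewrite dotvC dotvBl !(dotvC w). Qed.

Lemma sqnorm_ge0 v : 0 <= sqnorm v.
Proof. by apply: sumr_ge0 => i _; rewrite -expr2 sqr_ge0. Qed.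

Lemma sqnorm_eq0 v : (sqnorm v == 0) = (v == 0).
Proof.
apply/idP/eqP => [|->]; last by rewrite /sqnorm /dotv big1 // => i _; rewrite mxE mul0r.
rewrite psumr_eq0 => [/allP v0|i _]; last by rewrite -expr2 sqr_ge0.
apply/rowP => i; apply/eqP; rewrite mxE -[_ == 0]orbb -mulf_eq0.
exact: implyP (v0 i (mem_index_enum i)) isT.
Qed.

Lemma sqnormZ a v : sqnorm (a *: v) = a ^+ 2 * sqnorm v.
Proof. by rewrite /sqnorm dotvZl dotvZr mulrA expr2. Qed.

Lemma sqnormB u v : sqnorm (u - v) = sqnorm u - 2 * dotv u v + sqnorm v.
Proof. by rewrite /sqnorm dotvBl !dotvBr (dotvC v u); ring. Qed.

(* Pythagoras along the unit vector [u]: the second summand is the squared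
   distance from [v] to the line spanned by [u]. *)
Lemma sqnorm_lineB u v r : sqnorm u = 1 ->
  sqnorm (r *: u - v) = (r - dotv u v) ^+ 2 + (sqnorm v - dotv u v ^+ 2).
Proof. by move=> u1; rewrite sqnormB sqnormZ u1 dotvZl; ring. Qed.

Lemma line_residual_ge0 u v : sqnorm u = 1 -> 0 <= sqnorm v - dotv u v ^+ 2.
Proof.
by move=> u1; have := sqnorm_ge0 (dotv u v *: u - v); rewrite sqnorm_lineB // subrr expr0n add0r.
Qed.

Lemma line_residual_eq0 u v : sqnorm u = 1 ->
  (sqnorm v - dotv u v ^+ 2 == 0) = (v == dotv u v *: u).
Proof.
move=> u1; have := sqnorm_lineB u v (dotv u v) u1; rewrite subrr expr0n add0r => <-.
by rewrite sqnorm_eq0 subr_eq0 eq_sym.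
Qed.

Lemma enorm_gt0 v : v != 0 -> 0 < enorm v.
Proof. by move=> v0; rewrite sqrtr_gt0 lt_def sqnorm_eq0 v0 sqnorm_ge0. Qed.

Lemma sqnorm_uhat v : v != 0 -> sqnorm (uhat v) = 1.
Proof.
move=> v0; rewrite sqnormZ exprVn sqr_sqrtr ?sqnorm_ge0 // mulVf //.
by rewrite sqnorm_eq0.
Qed.

Lemma enormZ_uhat v : v != 0 -> enorm v *: uhat v = v.
Proof. by move=> v0; rewrite scalerA mulfV ?scale1r // gt_eqF ?enorm_gt0. Qed.

End Euclidean.

Section Policy.
Context {R : realType} {d : nat}.
Variable beta : R.
Implicit Types (w z : 'rV[R]_d).

Lemma pobjE w z : beta != 0 ->
  pobj beta w z = sqnorm w / (2 * beta) - beta / 2 * sqnorm (z - beta^-1 *: w).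
Proof.
by move=> beta_neq0; rewrite /pobj sqnormB sqnormZ dotvZr (dotvC z w); field.
Qed.

Lemma pobj_argmax w y : 0 < beta ->
  (forall z, pobj beta w z <= pobj beta w y) -> y = beta^-1 *: w.
Proof.
move=> beta_gt0 /(_ (beta^-1 *: w)); rewrite !pobjE ?gt_eqF // subrr.
have /eqP -> : sqnorm (0 : 'rV[R]_d) == 0 by rewrite sqnorm_eq0.
rewrite mulr0 subr0 => y_opt.
have : beta / 2 * sqnorm (y - beta^-1 *: w) <= 0 by lra.
rewrite pmulr_rle0 ?divr_gt0 // => s_le0; apply/eqP; rewrite -subr_eq0 -sqnorm_eq0.
by rewrite eq_le s_le0 sqnorm_ge0.
Qed.

End Policy.

Section MonotoneIteration.
Variables (R : realType) (f : R -> R) (a b : R).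
Hypothesis f_fix : f b = b.
Hypothesis f_gtid : forall x, a < x < b -> x < f x.
Hypothesis f_homo : {in `[a, b] &, {homo f : x y / x <= y}}.
Hypothesis f_cont : forall x, x \in `[a, b] -> {for x, continuous f}.

Lemma f_step_itv x : a < x <= b -> x <= f x <= b.
Proof.
case/andP=> ax xb; have ab := lt_le_trans ax xb.
have [xltb|bx] := ltP x b; last first.
  have -> : x = b by apply/le_anti; rewrite xb bx.
  by rewrite f_fix lexx.
rewrite ltW ?f_gtid ?ax //= -[X in _ <= X]f_fix f_homo //.
by rewrite in_itv /= ltW.
by rewrite in_itv /= (ltW ab) lexx.
Qed.

Variable x0 : R.
Hypothesis x0_in : a < x0 <= b.

Lemma iter_in_itv n : a < iter n f x0 <= b.
Proof.
elim: n => [//|n /andP[an nb]]; rewrite iterS.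
have /andP[xn_le fxn_le] : iter n f x0 <= f (iter n f x0) <= b.
  by apply: f_step_itv; rewrite an nb.
by rewrite (lt_le_trans an xn_le) fxn_le.
Qed.

Lemma iter_nondecreasing : nondecreasing_seq (fun n => iter n f x0).
Proof.
apply/nondecreasing_seqP => n; rewrite iterS.
by case/andP: (f_step_itv (iter n f x0) (iter_in_itv n)).
Qed.

Lemma iter_cvg_fixpoint : (fun n => iter n f x0) @ \oo --> b.
Proof.
set u := fun n => iter n f x0.
have u_ab n : a < u n <= b := iter_in_itv n.
have u_ub : ubound (range u) b by move=> _ [n _ <-]; case/andP: (u_ab n).
have u_cvg := nondecreasing_cvgn iter_nondecreasing (ex_intro _ b u_ub).
set L := sup (range u) in u_cvg.
have aL : a < L.
  have /andP[a0 _] := u_ab 0%N; apply: (lt_le_trans a0).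
  by apply: ub_le_sup; [exists b | exists 0%N].
have Lb : L <= b by apply: ge_sup => //; exists (u 0%N), 0%N.
have fL : f L = L.
  have fu_cvg : (fun n => f (u n)) @ \oo --> L by rewrite -cvg_shiftS in u_cvg.
  have fu_to_fL : (fun n => f (u n)) @ \oo --> f L.
    by apply: (cvg_comp _ _ u_cvg); apply: f_cont; rewrite in_itv /= (ltW aL) Lb.
  exact: (cvg_unique (@Rhausdorff R) fu_to_fL fu_cvg).
suff <- : L = b by [].
apply/le_anti; rewrite Lb leNgt; apply/negP => Lltb.
by have := f_gtid L; rewrite aL Lltb fL ltxx => /(_ isT).
Qed.

End MonotoneIteration.

Section Model.
Context {R : realType} {d : nat} {Umax tau beta eta lwd : R} {ytar w0 : 'rV[R]_d}.
Hypothesis w0_neq0 : w0 != 0.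

Local Notation u := (uhat w0).
Local Notation C := (dotv (uhat w0) ytar).
Local Notation D2 := (sqnorm ytar - dotv (uhat w0) ytar ^+ 2).
Local Notation Ubar := (Umax * expR (- (tau * D2))).
Local Notation F := (Ffun Umax tau beta eta lwd ytar w0).
Local Notation f := (ffun Umax tau beta eta lwd ytar w0).

Let u_unit : sqnorm u = 1. Proof. exact: sqnorm_uhat. Qed.

Lemma util_line r :
  util Umax tau ytar (r *: u) = Ubar * expR (- (tau * (r - C) ^+ 2)).
Proof.
by rewrite /util sqnorm_lineB // mulrDr opprD expRD mulrAC mulrA.
Qed.

Lemma ffun_derivable r : derivable f r 1.
Proof.
pose g r := - (tau * (r - C) ^+ 2).
have dg : derivable (expR \o g) r 1.
  by case: (is_derive1_comp (is_derive_expR (g r)) (derivableP _)).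
have -> : f = fun r => r * (1 + (eta / beta * (Ubar * (expR \o g) r) - eta * r ^+ 2 - lwd)).
  by apply/funext => x; rewrite /ffun /Ffun util_line.
by []. (* derivability of sums, products and powers is inferred *)
Qed.

Lemma ffun_continuous r : {for r, continuous f}.
Proof. exact/differentiable_continuous/derivable1_diffP/ffun_derivable. Qed.

Lemma ffun_fix r : F r = 0 -> f r = r.
Proof. by move=> Fr; rewrite /ffun Fr addr0 mulr1. Qed.

Lemma ffun_gtid r : 0 < r -> 0 < F r -> r < f r.
Proof. by move=> r_gt0 Fr_gt0; rewrite /ffun mulrDr mulr1 ltrDl mulr_gt0. Qed.

Hypotheses (Umax_gt0 : 0 < Umax) (tau_gt0 : 0 < tau).

Lemma Ubar_le_Umax : Ubar <= Umax.
Proof.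
apply: ler_piMr; first exact: ltW.
rewrite expR_le1 oppr_le0 mulr_ge0 ?(ltW tau_gt0) //.
exact: line_residual_ge0.
Qed.

Lemma Ubar_lt_Umax : 0 < D2 -> Ubar < Umax.
Proof. by move=> D2_gt0; rewrite gtr_pMr // expR_lt1 oppr_lt0 mulr_gt0. Qed.

Lemma util_line_lt r : C < r -> util Umax tau ytar (r *: u) < Ubar.
Proof.
move=> Cr; rewrite util_line gtr_pMr ?mulr_gt0 ?expR_gt0 //.
by rewrite expR_lt1 oppr_lt0 mulr_gt0 // exprn_gt0 // subr_gt0.
Qed.

Lemma line_residual_gt0 : 0 < D2 <-> ~ exists c, ytar = c *: w0.
Proof.
rewrite lt_def line_residual_ge0 // andbT line_residual_eq0 //; split.
  move=> /eqP ytar_off [c ytar_on]; apply: ytar_off.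
  have -> : ytar = (c * enorm w0) *: u by rewrite -scalerA enormZ_uhat.
  by rewrite dotvZr -/(sqnorm u) u_unit mulr1.
move=> ytar_off; apply/negP => /eqP ytar_on; apply: ytar_off.
by exists (C / enorm w0); rewrite {1}ytar_on scalerA mulrC.
Qed.

Hypotheses (beta_gt0 : 0 < beta) (eta_gt0 : 0 < eta).

Lemma Ffun_decreasing r s : 0 <= r -> C <= r -> r < s -> F s < F r.
Proof.
move=> r_ge0 Cr rs; rewrite /Ffun !util_line.
have sq_lt (x y : R) : 0 <= x -> x < y -> x ^+ 2 < y ^+ 2.
  by move=> x_ge0 xy; rewrite !expr2 ltr_pM.
have exp_lt : expR (- (tau * (s - C) ^+ 2)) < expR (- (tau * (r - C) ^+ 2)).
  by rewrite ltr_expR ltrN2 ltr_pM2l // sq_lt ?subr_ge0 // ltrBlDr subrK.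
have := sq_lt _ _ r_ge0 rs; rewrite -(ltr_pM2l eta_gt0).
have : eta / beta * (Ubar * expR (- (tau * (s - C) ^+ 2))) <
       eta / beta * (Ubar * expR (- (tau * (r - C) ^+ 2))).
  by rewrite ltr_pM2l ?divr_gt0 // ltr_pM2l ?mulr_gt0 ?expR_gt0.
lra.
Qed.

Lemma rlhf_step r :
  (1 - lwd) *: ((beta * r) *: u)
    - (eta * (dotv ((beta * r) *: u) (r *: u) - util Umax tau ytar (r *: u))) *: (r *: u)
  = (beta * f r) *: u.
Proof.
rewrite dotvZl dotvZr -/(sqnorm u) u_unit mulr1 !(scalerA _ _ u) -scalerBl.
by congr (_ *: _); rewrite /ffun /Ffun; field; rewrite gt_eqF.
Qed.

Lemma rlhf_trajectory w y : rlhf_iter Umax tau beta eta lwd ytar w0 w y ->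
  forall t, y t = iter t f (enorm w0 / beta) *: u.
Proof.
case=> w_0 y_opt w_S.
have y_w t : y t = beta^-1 *: w t by apply: pobj_argmax.
have w_y t : w t = beta *: y t by rewrite y_w scalerA mulfV ?scale1r ?gt_eqF.
elim=> [|t IH]; first by rewrite y_w w_0 -{1}(enormZ_uhat _ w0_neq0) scalerA mulrC.
by rewrite y_w w_S w_y IH scalerA rlhf_step scalerA mulKf ?gt_eqF.
Qed.

Context {rstar : R}.
Hypothesis F_rstar : F rstar = 0.
Hypothesis F_gt0_upto_C : forall r, 0 <= r <= C -> 0 < F r.

Lemma C_lt_root : 0 <= rstar -> C < rstar.
Proof.
move=> rstar_ge0; rewrite ltNge; apply/negP => rstar_le_C.
by have := F_gt0_upto_C rstar; rewrite rstar_ge0 rstar_le_C F_rstar ltxx => /(_ isT).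
Qed.

Lemma Ffun_gt0_below_root r : 0 <= r < rstar -> 0 < F r.
Proof.
move=> /andP[r_ge0 r_lt]; have [r_le_C|C_lt_r] := lerP r C.
  by apply: F_gt0_upto_C; rewrite r_ge0 r_le_C.
by rewrite -F_rstar Ffun_decreasing // ltW.
Qed.

Hypothesis f'_gt0 : forall r, 0 <= r <= rstar -> 0 < derive1 f r.

Lemma ffun_increasing : {in `[0, rstar] &, {homo f : x y / x < y}}.
Proof.
apply: gtr0_derive1_lt_cc => [x _||]; first exact: ffun_derivable.
  by move=> x; rewrite in_itv /= => /andP[x_gt0 x_lt]; rewrite f'_gt0 // !ltW.
by apply: derivable_within_continuous => x _; exact: ffun_derivable.
Qed.

Lemma ffun_iter_cvg r0 : 0 < r0 <= rstar -> (fun n => iter n f r0) @ \oo --> rstar.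
Proof.
move=> r0_in; apply: iter_cvg_fixpoint r0_in.
- exact: ffun_fix.
- by move=> x /andP[x_gt0 x_lt]; rewrite ffun_gtid // Ffun_gt0_below_root // ltW.
- exact: ltW_homo_in ffun_increasing.
- by move=> x _; exact: ffun_continuous.
Qed.

End Model.

Theorem proposition4 (R : realType) (d : nat) (Umax tau beta eta lwd : R)
    (ytar w0 : 'rV[R]_d) (w y : nat -> 'rV[R]_d) (rstar : R) :
  (1 <= d)%N -> 0 < Umax -> 0 < tau -> 0 < beta -> 0 < eta -> 0 <= lwd ->
  w0 != 0 ->
  rlhf_iter Umax tau beta eta lwd ytar w0 w y ->
  (* r* is the unique positive root of F *)
  0 < rstar -> Ffun Umax tau beta eta lwd ytar w0 rstar = 0 ->
  (forall r, 0 < r -> Ffun Umax tau beta eta lwd ytar w0 r = 0 -> r = rstar) ->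
  (* (A1) *)
  (forall r, 0 <= r <= dotv (uhat w0) ytar ->
     0 < Ffun Umax tau beta eta lwd ytar w0 r) ->
  (* (A2) *)
  lwd < 1 ->
  (forall r, 0 <= r <= rstar ->
     0 < derive1 (ffun Umax tau beta eta lwd ytar w0) r) ->
  (* r_0 = ||w0|| / beta < r* *)
  enorm w0 / beta < rstar ->
  let C := dotv (uhat w0) ytar in
  let D2 := sqnorm ytar - C ^+ 2 in
  let Ubar := Umax * expR (- (tau * D2)) in
  (* (i) *)
  (forall t, exists c : R, y t = c *: w0) /\
  (* (ii) *)
  (exists r : nat -> R,
     (forall t, y t = r t *: uhat w0) /\ r 0%N = enorm w0 / beta /\
     r @ \oo --> rstar) /\
  (* (iii) *)
  (C < rstar /\
   util Umax tau ytar (rstar *: uhat w0) < Ubar /\ Ubar <= Umax /\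
   (0 < D2 -> Ubar < Umax) /\
   (0 < D2 <-> ~ (exists c : R, ytar = c *: w0))).
Proof.
move=> _ Umax_gt0 tau_gt0 beta_gt0 eta_gt0 _ w0_neq0 rlhf rstar_gt0 F_rstar _ A1 _ A2
  r0_lt C D2 Ubar.
pose r t := iter t (ffun Umax tau beta eta lwd ytar w0) (enorm w0 / beta).
have y_line : forall t, y t = r t *: uhat w0 := rlhf_trajectory w0_neq0 beta_gt0 w y rlhf.
have C_lt : C < rstar := C_lt_root F_rstar A1 (ltW rstar_gt0).
split; [|split; [|split]] => //.
- by move=> t; exists (r t / enorm w0); rewrite y_line scalerA.
- exists r; split=> //; split=> //.
  apply: (ffun_iter_cvg w0_neq0 Umax_gt0 tau_gt0 beta_gt0 eta_gt0 F_rstar A1 A2).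
  by rewrite divr_gt0 ?enorm_gt0 ?ltW.
- split; first exact: util_line_lt.
  split; first exact: Ubar_le_Umax.
  split; first exact: Ubar_lt_Umax.
  exact: line_residual_gt0.
Qed.
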